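(* In the setting below, the function $F=F(\theta,m,\bar a)$ is invariant under $W(m)=\{w\in W: w\circ m=m\}$: $F(wx)=F(x)$ for all $w\in W(m)$ and $x\in\check T\otimes\mathbb{C}$.
   Context: $\mathbb{T}$ is the circle group, $\mathbb{T}[n]$ its subgroup of order $n\ge1$. $G$ is a compact connected Lie group with maximal torus $T$, Weyl group $W$, $\check T=\mathrm{Hom}(\mathbb{T},T)$, $\hat T=\mathrm{Hom}(T,\mathbb{T})$; characters are extended $\mathbb{C}$-linearly to $\check T\otimes\mathbb{C}$ and $\mathbb{Z}[\hat T]$ is viewed as functions of $x\in\check T\otimes\mathbb{C}$ via $\chi\mapsto e^{\chi(x)}$. Let $\xi\in H^4(BG;\mathbb{Z})$ be positive definite, with quadratic form $\phi:\check T\to\mathbb{Z}$ ($\phi(m)$ = coefficient of $z^2$ in $(Bm)^*\xi$), $I(a,b)=\phi(a+b)-\phi(a)-\phi(b)$, $\hat I(a)(b)=I(a,b)$. Fix $\tau$ with $\mathrm{Im}\,\tau>0$, $q=e^{2\pi i\tau}$, $C=\mathbb{C}/(2\pi i\mathbb{Z}+2\pi i\tau\mathbb{Z})$. A theta function of level $\xi$ is $\theta\in\mathbb{Z}[\hat T]((q))$, holomorphic in $(x,\tau)$, with $\theta(x+2\pi i\tau m)=e^{-\hat I(m)(x)}q^{-\phi(m)}\theta(x)$ for $m\in\check T$ and $\theta(wx)=\theta(x)$ for $w\in W$. Let $m:\mathbb{T}[n]\to T$ be a homomorphism, $a\in C$ with $na=0$, $\bar a\in\mathbb{C}$ a lift,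 $\ell,k\in\mathbb{Z}$ with $n\bar a=2\pi i\ell+2\pi i\tau k$, and $\bar m\in\check T$ with $\bar m|_{\mathbb{T}[n]}=m$. Define $F(\theta,m,\bar a)(x)=\exp\big(\tfrac{k}{n}\hat I(\bar m)(x)+\tfrac{k}{n}\phi(\bar m)\bar a\big)\theta(x+\bar m\otimes\bar a)$ (independent of the choice of $\bar m$). *)

(* Complex numbers are R[i] for R : realType
   (mathcomp-real-closed), viewed as a normed space over themselves via ^o. *)
From HB Require Import structures.
From mathcomp Require Import all_boot all_order all_algebra.
From mathcomp Require Import all_classical all_reals all_analysis.
From mathcomp Require Import complex.
Set Implicit Arguments. Unset Strict Implicit. Unset Printing Implicit Defensive.
Import Order.TTheory GRing.Theory Num.Theory.
Import numFieldNormedType.Exports.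
Local Open Scope classical_set_scope.
Local Open Scope ring_scope.
Local Open Scope complex_scope.

Notation CC R := ((R[i])^o).

Section Defs.
Variable R : realType.
Local Notation C := (CC R).

Definition cexp (z : C) : C :=
  (expR (complex.Re z))%:C * ((cos (complex.Im z))%:C + 'i * (sin (complex.Im z))%:C).

Definition twopii : C := (2 * pi)%:C * 'i.

Definition qq (tau : C) : C := cexp (twopii * tau).

Variable r : nat.
(* The maximal torus T is identified with (T)^r = {t in C^r | |t_j| = 1};
   its cocharacter lattice Tv = Hom(T,T) and character lattice Th = Hom(T,T)
   are both identified with 'rV[int]_r:  the cocharacter m is
   z |-> (z^(m_1), ..., z^(m_r)),  the character chi is t |-> prod_j t_j^(chi_j).
   Tv (x) C = 'rV[C]_r and characters are extended C-linearly. *)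

Definition char_eval (chi : 'rV[int]_r) (x : 'rV[C]_r) : C :=
  \sum_(j < r) (chi 0 j)%:~R * x 0 j.

Definition toC (m : 'rV[int]_r) : 'rV[C]_r := map_mx (fun z : int => z%:~R) m.

Definition tens (m : 'rV[int]_r) (a : C) : 'rV[C]_r := a *: toC m.

(* An element w of the Weyl group is an automorphism of T, given by an integral
   matrix: it acts on cocharacters by m |-> m *m w, on Tv (x) C by x |-> x *m w,
   and on T by t |-> (prod_i t_i^(w_ij))_j, so that w o m = (m *m w) on
   cocharacters. *)
Definition act_cochar (w : 'M[int]_r) (m : 'rV[int]_r) : 'rV[int]_r := m *m w.
Definition act_lie (w : 'M[int]_r) (x : 'rV[C]_r) : 'rV[C]_r := x *m map_mx (fun z : int => z%:~R) w.
Definition act_torus (w : 'M[int]_r) (t : 'rV[C]_r) : 'rV[C]_r :=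
  \row_(j < r) \prod_(i < r) (t 0 i) ^ (w i j).

Definition finite_matrix_group (W : seq 'M[int]_r) : Prop :=
  [/\ 1%:M \in W,
      (forall v w, v \in W -> w \in W -> v *m w \in W) &
      (forall w, w \in W -> exists2 w', w' \in W & w *m w' = 1%:M /\ w' *m w = 1%:M)].

(* The element xi of H^4(BG;Z) restricted to H^4(BT;Z) = Sym^2(Th) is the
   integral quadratic polynomial  sum_{i<=j} A_ij t_i t_j  in the generators
   t_i of H^2(BT;Z) = Th.  phi(m) is the coefficient of z^2 in (Bm)^* xi. *)
Definition phi (A : 'M[int]_r) (m : 'rV[int]_r) : int :=
  \sum_(i < r) \sum_(j < r | (i <= j)%N) A i j * m 0 i * m 0 j.

Definition Iform (A : 'M[int]_r) (a b : 'rV[int]_r) : int :=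
  phi A (a + b) - phi A a - phi A b.

Definition unitv (j : 'I_r) : 'rV[int]_r := \row_(k < r) (k == j)%:R.

Definition Ihat (A : 'M[int]_r) (a : 'rV[int]_r) : 'rV[int]_r :=
  \row_(j < r) Iform A a (unitv j).

(* xi comes from H^4(BG), hence is W-invariant, and is positive definite *)
Definition level_form (W : seq 'M[int]_r) (A : 'M[int]_r) : Prop :=
  (forall w m, w \in W -> phi A (act_cochar w m) = phi A m) /\
  (forall m, m != 0 -> 0 < phi A m).

(* An element of Z[Th]: a finite formal sum  sum c_chi chi, represented by a list
   of (coefficient, character) pairs; as a function of x it is
   sum c_chi e^{chi(x)}. *)
Definition eval_grpring (s : seq (int * 'rV[int]_r)) (x : 'rV[C]_r) : C :=
  \sum_(p <- s) (p.1)%:~R * cexp (char_eval p.2 x).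

(* theta : (tau, x) |-> theta(x) (for Im tau > 0).
   theta is a theta function of level xi:
   - theta is an element sum_{k >= k0} q^k theta_k of Z[Th]((q)), i.e. the series
     converges to theta(x) for every x and every tau in the upper half plane;
   - theta is holomorphic in (x, tau) on (Tv (x) C) x H;
   - theta(x + 2 pi i tau m) = e^{-\hat I(m)(x)} q^{-phi(m)} theta(x);
   - theta(w x) = theta(x) for w in W. *)
Definition theta_function (W : seq 'M[int]_r) (A : 'M[int]_r)
    (theta : C -> 'rV[C]_r -> C) : Prop :=
  [/\ (exists (k0 : int) (c : nat -> seq (int * 'rV[int]_r)),
         forall (tau : C) (x : 'rV[C]_r), 0 < complex.Im tau ->
           (fun N : nat => \sum_(j < N) qq tau ^ (k0 + j%:Z) * eval_grpring (c j) x)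
             @ \oo --> theta tau x),
      (forall (tau : C) (x : 'rV[C]_r), 0 < complex.Im tau ->
         differentiable (fun p : 'rV[C]_r * C => theta p.2 p.1) (x, tau)),
      (forall (tau : C) (m : 'rV[int]_r) (x : 'rV[C]_r), 0 < complex.Im tau ->
         theta tau (x + tens m (twopii * tau))
         = cexp (- char_eval (Ihat A m) x) * qq tau ^ (- phi A m) * theta tau x) &
      (forall (tau : C) (w : 'M[int]_r) (x : 'rV[C]_r), 0 < complex.Im tau -> w \in W ->
         theta tau (act_lie w x) = theta tau x)].

(* The subgroup T[n] of T is {z in C | z^n = 1}.  A homomorphism
   m : T[n] -> T is a function C -> C^r (only its values on T[n] matter)
   which is multiplicative on T[n] with values in T. *)
Definition in_Tn (n : nat) (z : C) : Prop := z ^+ n = 1.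

Definition hom_Tn_T (n : nat) (m : C -> 'rV[C]_r) : Prop :=
  (forall z, in_Tn n z -> forall j, `|m z 0 j| = 1) /\
  (forall z z', in_Tn n z -> in_Tn n z' ->
     m (z * z') = \row_(j < r) (m z 0 j * m z' 0 j)).

Definition restricts_to (n : nat) (mbar : 'rV[int]_r) (m : C -> 'rV[C]_r) : Prop :=
  forall z, in_Tn n z -> m z = \row_(j < r) z ^ (mbar 0 j).

Definition in_Wm (W : seq 'M[int]_r) (n : nat) (m : C -> 'rV[C]_r) (w : 'M[int]_r) : Prop :=
  w \in W /\ forall z, in_Tn n z -> act_torus w (m z) = m z.

Definition Ffun (A : 'M[int]_r) (theta : C -> 'rV[C]_r -> C) (tau : C)
    (n : nat) (k : int) (mbar : 'rV[int]_r) (abar : C) (x : 'rV[C]_r) : C :=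
  cexp ((k%:~R / n%:R) * char_eval (Ihat A mbar) x
        + (k%:~R / n%:R) * (phi A mbar)%:~R * abar)
  * theta tau (x + tens mbar abar).

End Defs.

(* If w fixes m on T[n], then w^-1 moves mbar by a multiple n v of a cocharacter v.
   Using the W-invariance of theta, F(w x) evaluates theta at
   x + mbar (x) abar + v (x) (n abar), and n abar = 2 pi i l + 2 pi i tau k, so the
   periodicity and quasi-periodicity of theta turn this shift into an exponential
   factor.  The W-invariance of phi gives I(mbar, v) = - n phi(v), and with it this
   factor exactly compensates the change exp(k Ihat(v)(x)) of the prefactor, up to
   exp(2 pi i k l phi(v)) = 1. *)

From HB Require Import structures.
From mathcomp Require Import all_boot all_order all_algebra cyclic separable cyclotomic.
From mathcomp Require Import all_classical all_reals all_analysis.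
From mathcomp Require Import complex.
From mathcomp Require Import ring.
Import Order.TTheory GRing.Theory Num.Theory.
Import numFieldNormedType.Exports.
Local Open Scope ring_scope.
Local Open Scope complex_scope.

Section QuadraticForm.
Context {r : nat} (A : 'M[int]_r).
Implicit Types (a b v : 'rV[int]_r) (c : int).

Lemma IformE a b : Iform A a b =
  \sum_(i < r) \sum_(j < r | (i <= j)%N) A i j * (a 0 i * b 0 j + b 0 i * a 0 j).
Proof.
rewrite /Iform /phi -!sumrB; apply: eq_bigr => i _; rewrite -!sumrB.
by apply: eq_bigr => j _; rewrite !mxE /=; ring.
Qed.

Lemma IformC a b : Iform A a b = Iform A b a.
Proof. by rewrite !IformE; apply: eq_bigr => i _; apply: eq_bigr => j _; ring. Qed.

Lemma IformDl a1 a2 b : Iform A (a1 + a2) b = Iform A a1 b + Iform A a2 b.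
Proof.
rewrite !IformE -big_split; apply: eq_bigr => i _; rewrite -big_split.
by apply: eq_bigr => j _; rewrite !mxE /=; ring.
Qed.

Lemma IformZl c a b : Iform A (c *: a) b = c * Iform A a b.
Proof.
rewrite !IformE big_distrr; apply: eq_bigr => i _; rewrite big_distrr.
by apply: eq_bigr => j _; rewrite !mxE /=; ring.
Qed.

Lemma IformDr a b1 b2 : Iform A a (b1 + b2) = Iform A a b1 + Iform A a b2.
Proof. by rewrite IformC IformDl IformC (IformC b2). Qed.

Lemma IformZr c a b : Iform A a (c *: b) = c * Iform A a b.
Proof. by rewrite IformC IformZl IformC. Qed.

Lemma Iform0r a : Iform A a 0 = 0.
Proof. by rewrite -(scale0r (0 : 'rV[int]_r)) IformZr mul0r. Qed.

Lemma phiD a b : phi A (a + b) = phi A a + phi A b + Iform A a b.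
Proof. by rewrite /Iform; ring. Qed.

Lemma phiZ c a : phi A (c *: a) = c ^+ 2 * phi A a.
Proof.
rewrite /phi big_distrr; apply: eq_bigr => i _; rewrite big_distrr.
by apply: eq_bigr => j _; rewrite !mxE /=; ring.
Qed.

Lemma unitvE (j : 'I_r) : unitv j = delta_mx 0 j.
Proof. by apply/matrixP => i k; rewrite !mxE (ord1 i) eqxx; case: (k == j). Qed.

Lemma Iform_sumr a b : Iform A a b = \sum_(j < r) b 0 j * Iform A a (unitv j).
Proof.
rewrite {1}(row_sum_delta b) (big_morph (Iform A a) (IformDr a) (Iform0r a)).
by apply: eq_bigr => j _; rewrite IformZr unitvE.
Qed.

Lemma Iform_act w a b : (forall v, phi A (act_cochar w v) = phi A v) ->
  Iform A (a *m w) (b *m w) = Iform A a b.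
Proof. by move=> phiw; rewrite /Iform -mulmxDl -!/(act_cochar w _) !phiw. Qed.

Lemma Iform_of_phi_shift c a v : c != 0 -> phi A (a + c *: v) = phi A a ->
  Iform A a v = - (c * phi A v).
Proof.
rewrite phiD phiZ IformZr => c_neq0 e.
have : c * (Iform A a v + c * phi A v) = 0.
  by rewrite -(subrr (phi A a)) -{1}e; ring.
by move/eqP; rewrite mulf_eq0 (negbTE c_neq0) addr_eq0 => /eqP.
Qed.

End QuadraticForm.

Section ComplexExponential.
Context {R : realType}.
Local Notation C := (CC R).
Implicit Types z : C.

Lemma cexpD z1 z2 : cexp (z1 + z2) = cexp z1 * cexp z2.
Proof.
case: z1 z2 => [a1 b1] [a2 b2]; rewrite /cexp /= expRD cosD sinD.
by apply/eqP; rewrite eq_complex /=; apply/andP; split; apply/eqP; ring.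
Qed.

Lemma cexp0 : cexp (0 : C) = 1.
Proof.
rewrite /cexp /= expR0 cos0 sin0.
by apply/eqP; rewrite eq_complex /=; apply/andP; split; apply/eqP; ring.
Qed.

Lemma cexp_twopii : cexp (twopii R) = 1.
Proof.
rewrite /cexp /twopii /= !mulr0 !mulr1 !subr0 !addr0 expR0 (mulr_natl pi 2).
rewrite cos2pi sin2pi.
by apply/eqP; rewrite eq_complex /=; apply/andP; split; apply/eqP; ring.
Qed.

Lemma cexpN z : cexp (- z) = (cexp z)^-1.
Proof. by apply/esym/mulr1_eq; rewrite -cexpD subrr cexp0. Qed.

Lemma cexpMn z n : cexp (n%:R * z) = cexp z ^+ n.
Proof.
elim: n => [|n IHn]; first by rewrite mul0r cexp0 expr0.
by rewrite -addn1 natrD mulrDl mul1r cexpD IHn exprD expr1.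
Qed.

Lemma cexpMz z (j : int) : cexp (j%:~R * z) = cexp z ^ j.
Proof.
case: j => n; first exact: cexpMn.
by rewrite NegzE mulrNz mulNr cexpN cexpMn.
Qed.

Lemma cexp_twopii_periodic z (j : int) : cexp (z + twopii R * j%:~R) = cexp z.
Proof. by rewrite cexpD [twopii R * _]mulrC cexpMz cexp_twopii exp1rz mulr1. Qed.

End ComplexExponential.

Section CharacterEvaluation.
Context {R : realType} {r : nat}.
Local Notation C := (CC R).
Implicit Types (chi a b v : 'rV[int]_r) (x y : 'rV[C]_r) (w : 'M[int]_r) (z : C).

Lemma char_evalD chi x y : char_eval chi (x + y) = char_eval chi x + char_eval chi y.
Proof. by rewrite /char_eval -big_split; apply: eq_bigr => j _; rewrite !mxE mulrDr. Qed.

Lemma char_evalZ chi z x : char_eval chi (z *: x) = z * char_eval chi x.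
Proof. by rewrite /char_eval big_distrr; apply: eq_bigr => j _; rewrite !mxE mulrCA. Qed.

Lemma char_evalDl chi1 chi2 x :
  char_eval (chi1 + chi2) x = char_eval chi1 x + char_eval chi2 x.
Proof.
by rewrite /char_eval -big_split; apply: eq_bigr => j _; rewrite !mxE intrD mulrDl.
Qed.

Lemma char_evalZl (c : int) chi x : char_eval (c *: chi) x = c%:~R * char_eval chi x.
Proof.
by rewrite /char_eval big_distrr; apply: eq_bigr => j _; rewrite !mxE intrM /= mulrA.
Qed.

Lemma char_eval_toC chi v : char_eval chi (toC R v) = (\sum_(j < r) chi 0 j * v 0 j)%:~R.
Proof. by rewrite rmorph_sum; apply: eq_bigr => j _; rewrite !mxE /= intrM. Qed.

Lemma tensDl a b z : tens (a + b) z = tens a z + tens b z.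
Proof. by rewrite /tens /toC raddfD scalerDr. Qed.

Lemma tensDr v z1 z2 : tens v (z1 + z2) = tens v z1 + tens v z2.
Proof. by rewrite /tens scalerDl. Qed.

Lemma tensZl (c : int) v z : tens (c *: v) z = tens v (c%:~R * z).
Proof. by apply/matrixP => i j; rewrite !mxE intrM mulrCA mulrA. Qed.

Lemma act_lieD w x y : act_lie w (x + y) = act_lie w x + act_lie w y.
Proof. exact: mulmxDl. Qed.

Lemma act_lieM w1 w2 x : act_lie w2 (act_lie w1 x) = act_lie (w1 *m w2) x.
Proof. by rewrite /act_lie -mulmxA -map_mxM. Qed.

Lemma act_lie1 x : act_lie 1%:M x = x.
Proof. by rewrite /act_lie map_mx1 mulmx1. Qed.

Lemma act_lie_tens w v z : act_lie w (tens v z) = tens (act_cochar w v) z.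
Proof. by rewrite /act_lie /tens /toC -scalemxAl -map_mxM. Qed.

Context {A : 'M[int]_r}.

Lemma IhatD a b : Ihat A (a + b) = Ihat A a + Ihat A b.
Proof. by apply/matrixP => i j; rewrite !mxE IformDl. Qed.

Lemma IhatZ (c : int) a : Ihat A (c *: a) = c *: Ihat A a.
Proof. by apply/matrixP => i j; rewrite !mxE IformZl. Qed.

Lemma char_eval_Ihat_toC a b : char_eval (Ihat A a) (toC R b) = (Iform A a b)%:~R.
Proof.
by rewrite char_eval_toC (Iform_sumr A a b); congr _%:~R; apply: eq_bigr => j _; rewrite mxE mulrC.
Qed.

Lemma char_eval_Ihat_act {w w' a x} : w *m w' = 1%:M ->
  (forall p q, Iform A (p *m w') (q *m w') = Iform A p q) ->
  char_eval (Ihat A a) (act_lie w x) = char_eval (Ihat A (act_cochar w' a)) x.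
Proof.
move=> ww' Iw'.
have Ihat_w' i : Iform A (a *m w') (unitv i) = \sum_(j < r) w i j * Iform A a (unitv j).
  rewrite -{1}(mulmx1 (unitv i)) -ww' mulmxA Iw' Iform_sumr.
  by apply: eq_bigr => j _; rewrite unitvE -rowE mxE.
rewrite /char_eval /act_lie.
under eq_bigr => j _ do rewrite !mxE big_distrr /=.
rewrite exchange_big /=; apply: eq_bigr => i _.
rewrite !mxE Ihat_w' rmorph_sum big_distrl /=; apply: eq_bigr => j _.
by rewrite !mxE intrM mulrCA mulrC [(Iform _ _ _)%:~R * _]mulrC.
Qed.

End CharacterEvaluation.

Lemma eval_grpring_periodic {R : realType} {r : nat} (s : seq (int * 'rV[int]_r))
    (y : 'rV[CC R]_r) (u : 'rV[int]_r) :
  eval_grpring s (y + tens u (twopii R)) = eval_grpring s y.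
Proof.
apply: eq_bigr => p _.
by rewrite char_evalD /tens char_evalZ char_eval_toC cexp_twopii_periodic.
Qed.

Section ThetaFunction.
Context {R : realType} {r : nat} {W : seq 'M[int]_r} {A : 'M[int]_r}
  {theta : CC R -> 'rV[CC R]_r -> CC R} {tau : CC R}.
Hypotheses (theta_fun : theta_function W A theta) (tau_upper : 0 < complex.Im tau).
Implicit Types (y : 'rV[CC R]_r) (u v : 'rV[int]_r).

Lemma theta_periodic y u : theta tau (y + tens u (twopii R)) = theta tau y.
Proof.
have [[k0 [c theta_lim]] _ _ _] := theta_fun.
have same_partial_sums N :
    \sum_(j < N) qq tau ^ (k0 + j%:Z) * eval_grpring (c j) (y + tens u (twopii R))
  = \sum_(j < N) qq tau ^ (k0 + j%:Z) * eval_grpring (c j) y.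
  by apply: eq_bigr => j _; rewrite eval_grpring_periodic.
have := theta_lim tau (y + tens u (twopii R)) tau_upper.
rewrite (funext same_partial_sums) => lim_shift.
exact: (cvg_unique (@norm_hausdorff _ _) lim_shift (theta_lim tau y tau_upper)).
Qed.

Lemma theta_shift_torsion y v {n : nat} {l k : int} {abar : CC R} :
  n%:R * abar = twopii R * l%:~R + twopii R * tau * k%:~R ->
  theta tau (y + tens (n%:Z *: v) abar)
  = cexp (- char_eval (Ihat A (k *: v)) y) * qq tau ^ (- phi A (k *: v)) * theta tau y.
Proof.
have [_ _ theta_quasi _] := theta_fun.
move=> n_abar; rewrite tensZl n_abar tensDr.
rewrite [twopii R * l%:~R]mulrC [twopii R * tau * k%:~R]mulrC -!tensZl.
by rewrite [tens (l *: v) _ + _]addrC addrA theta_periodic theta_quasi.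
Qed.

End ThetaFunction.

Lemma prim_root_exists (F : numClosedFieldType) (n : nat) :
  (0 < n)%N -> exists z : F, n.-primitive_root z.
Proof.
move=> n_gt0; pose p : {poly F} := 'X^n - 1.
have [s Dp] := closed_field_poly_normal p.
rewrite (monicP _) ?monicXnsubC // scale1r in Dp.
have s_roots : all n.-unity_root s by apply/allP => z; rewrite -root_prod_XsubC -Dp.
have size_s : (n < (size s).+1)%N by rewrite -(size_prod_XsubC s id) -Dp size_XnsubC.
have [|z] := hasP (has_prim_root n_gt0 s_roots _ size_s); last by exists z.
by rewrite -separable_prod_XsubC -Dp separable_Xn_sub_1 // pnatr_eq0 -lt0n.
Qed.

Lemma prim_root_dvdz (F : fieldType) (n : nat) (z : F) (d : int) :
  n.-primitive_root z -> z ^ d = 1 -> (n%:Z %| d)%Z.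
Proof.
move=> z_prim; rewrite dvdzE; case: d => p /= zp1; rewrite (prim_order_dvd z_prim).
  exact/eqP.
by rewrite -invr_eq1; apply/eqP.
Qed.

Section WeylStabilizer.
Context {R : realType} {r : nat}.
Local Notation C := (CC R).

Lemma act_torus_cochar (w : 'M[int]_r) (z : C) (v : 'rV[int]_r) :
  z \is a GRing.unit ->
  act_torus w (\row_j z ^ v 0 j) = \row_j z ^ (act_cochar w v) 0 j.
Proof.
move=> z_unit; apply/matrixP => i j; rewrite !mxE.
under eq_bigr => k _ do rewrite mxE exprz_exp.
by rewrite (big_morph (fun e : int => z ^ e) (exprzDr z_unit) (expr0z _)).
Qed.

Lemma cochar_congr_of_Wm {n : nat} {m : C -> 'rV[C]_r} {mbar : 'rV[int]_r}
    {w : 'M[int]_r} :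
  (0 < n)%N -> restricts_to n mbar m ->
  (forall z, in_Tn n z -> act_torus w (m z) = m z) ->
  exists u, act_cochar w mbar = mbar + n%:Z *: u.
Proof.
move=> n_gt0 mbar_res w_fixes.
have [z0 z0_prim] := @prim_root_exists R[i] n n_gt0.
have z0_Tn : in_Tn n (z0 : C) := prim_expr_order z0_prim.
have z0_unit : (z0 : C) \is a GRing.unit.
  by rewrite -(unitrX_pos _ n_gt0) z0_Tn unitr1.
have := w_fixes z0 z0_Tn; rewrite mbar_res // act_torus_cochar // => fixed.
have n_dvd j : (n%:Z %| act_cochar w mbar ord0 j - mbar ord0 j)%Z.
  apply: (@prim_root_dvdz _ _ (z0 : C) _ z0_prim).
  have := congr1 (fun M : 'rV[C]_r => M 0 j) fixed; rewrite !mxE => e.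
  by rewrite exprzDr // e -exprzDr // subrr expr0z.
exists (\row_j ((act_cochar w mbar ord0 j - mbar ord0 j) %/ n%:Z)%Z).
apply/matrixP => i j; rewrite (ord1 i) !mxE mulrC divzK; first by rewrite addrC subrK.
by have := n_dvd j; rewrite mxE.
Qed.

End WeylStabilizer.

Theorem lemma5p3 (R : realType) (r : nat) (W : seq 'M[int]_r) (A : 'M[int]_r)
    (theta : CC R -> 'rV[CC R]_r -> CC R) (tau : CC R)
    (n : nat) (m : CC R -> 'rV[CC R]_r) (abar : CC R) (l k : int)
    (mbar : 'rV[int]_r) :
  finite_matrix_group W ->
  level_form W A ->
  theta_function W A theta ->
  0 < complex.Im tau ->
  (1 <= n)%N ->
  hom_Tn_T n m ->
  n%:R * abar = twopii R * l%:~R + twopii R * tau * k%:~R ->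
  restricts_to n mbar m ->
  forall w, in_Wm W n m w ->
  forall x : 'rV[CC R]_r,
    Ffun A theta tau n k mbar abar (act_lie w x) = Ffun A theta tau n k mbar abar x.
Proof.
(* m is determined on T[n] by mbar. *)
move=> [_ _ W_inv] [phi_W _] theta_fun tau_upper n_gt0 _ n_abar mbar_res w [wW w_fixes] x.
have [w' w'W [ww' _]] := W_inv w wW.
have phi_w' v : phi A (act_cochar w' v) = phi A v := phi_W w' v w'W.
have [u mbar_w] := cochar_congr_of_Wm n_gt0 mbar_res w_fixes.
set v := - act_cochar w' u.
have mbar_w' : act_cochar w' mbar = mbar + n%:Z *: v.
  have e : mbar = act_cochar w' mbar + n%:Z *: act_cochar w' u.
    by rewrite -{1}(mulmx1 mbar) -ww' mulmxA -/(act_cochar w mbar) mbar_w mulmxDl -scalemxAl.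
  by rewrite /v scalerN [in RHS]e addrK.
have Iv : Iform A mbar v = - (n%:Z * phi A v).
  apply: Iform_of_phi_shift; last by rewrite -mbar_w' phi_w'.
  by rewrite eqz_nat -lt0n.
have theta_act : theta tau (act_lie w x + tens mbar abar)
               = theta tau (x + tens (mbar + n%:Z *: v) abar).
  have [_ _ _ theta_W] := theta_fun.
  by rewrite -(theta_W tau w' _ tau_upper w'W) act_lieD act_lieM ww' act_lie1 act_lie_tens mbar_w'.
rewrite /Ffun theta_act tensDl addrA (theta_shift_torsion theta_fun tau_upper _ _ n_abar).
rewrite (char_eval_Ihat_act ww' (fun p q => Iform_act A w' p q phi_w')) mbar_w'.
rewrite IhatD !IhatZ char_evalDl !char_evalZl char_evalD /tens char_evalZ char_eval_Ihat_toC.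
rewrite IformC Iv phiZ /qq -cexpMz mulrA -!cexpD.
congr (_ * _); rewrite -[RHS](cexp_twopii_periodic _ (k * l * phi A v)); congr cexp.
have n_neq0 : n%:R != 0 :> CC R by rewrite pnatr_eq0 -lt0n.
have -> : abar = (twopii R * l%:~R + twopii R * tau * k%:~R) / n%:R.
  by rewrite -n_abar [n%:R * abar]mulrC mulfK.
rewrite !(rmorphN, rmorphM, rmorphXn) /= -pmulrn.
by field.
Qed.
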